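(* Let $M$ be a $3$-connected matroid with $P\subseteq E(M)$ such that $M|P\cong U_{3,5}$. Suppose $\mathrm{cl}(P)$ contains no triangles and $P$ contains no triads. If $M\backslash p$ is not $3$-connected for some $p\in P$, then there is a labelling $\{p_1,p_2,p_3,p_4\}$ of $P-p$ such that $M\backslash p_i\backslash p_j$ is $3$-connected for each $i\in\{1,2\}$ and $j\in\{3,4\}$. *)

From HB Require Import structures.
From mathcomp Require Import all_boot.
Set Implicit Arguments. Unset Strict Implicit. Unset Printing Implicit Defensive.

Record matroid (T : finType) := Matroid {
  ground : {set T};
  rank : {set T} -> nat;
  rank_le_card : forall X : {set T}, X \subset ground -> rank X <= #|X|;
  rank_mono : forall X Y : {set T}, X \subset Y -> Y \subset ground -> rank X <= rank Y;
  rank_submod : forall X Y : {set T}, X \subset ground -> Y \subset ground ->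
    rank (X :|: Y) + rank (X :&: Y) <= rank X + rank Y
}.

Section Defs.
Variables (T : finType) (M : matroid T).
Local Notation E := (ground M).
Local Notation r := (rank M).

(* A k-separation of the restriction M|S (for deletion M\D take S = E - D):
   a partition (X, S - X) with |X|, |S - X| >= k and
   r(X) + r(S - X) - r(S) <= k - 1. *)
Definition ksep (S : {set T}) (k : nat) (X : {set T}) : bool :=
  [&& X \subset S, k <= #|X|, k <= #|S :\: X| &
      r X + r (S :\: X) < r S + k].

Definition three_connected_on (S : {set T}) : Prop :=
  forall (k : nat) (X : {set T}), 1 <= k < 3 -> ~~ ksep S k X.

Definition three_connected : Prop := three_connected_on E.

Definition three_connected_del (D : {set T}) : Prop :=
  three_connected_on (E :\: D).

Definition mclosure (X : {set T}) : {set T} :=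
  [set x in E | r (x |: X) == r X].

Definition dependent (X : {set T}) : bool := r X < #|X|.

Definition circuit (C : {set T}) : bool :=
  [&& C \subset E, dependent C &
      [forall Y : {set T}, (Y \proper C) ==> ~~ dependent Y]].

Definition dual_rank (X : {set T}) : nat := #|X| + r (E :\: X) - r E.

Definition codependent (X : {set T}) : bool := dual_rank X < #|X|.

Definition cocircuit (C : {set T}) : bool :=
  [&& C \subset E, codependent C &
      [forall Y : {set T}, (Y \proper C) ==> ~~ codependent Y]].

Definition mtriangle (C : {set T}) : bool := circuit C && (#|C| == 3).
Definition mtriad (C : {set T}) : bool := cocircuit C && (#|C| == 3).

End Defs.

Definition uniform_rank (k n : nat) (X : {set 'I_n}) : nat := minn #|X| k.

Definition restr_iso_uniform (T : finType) (M : matroid T) (P : {set T})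
  (k n : nat) : Prop :=
  P \subset ground M /\
  exists f : 'I_n -> T, [/\ injective f, f @: setT = P &
     forall X : {set 'I_n}, rank M (f @: X) = uniform_rank k X].

From HB Require Import structures.
From mathcomp Require Import all_boot zify.

(* Let (X, Y) be a 2-separation of M\p.  As M is 3-connected, p lies in the
   closure of neither side, while any three elements of P span P; so each side
   meets P - p in exactly two elements: X :&: P = {a, b} and Y :&: P = {c, d}.
   Suppose now that (U, V) separates M\a\c.  No side is a single element z,
   since E - {a, c, z} spans E: for z in P because P contains no triad, and
   otherwise because it keeps three elements of P.  No side contains all of
   b, d, p, for it would then span a and c and give a separation of M.  Up to the symmetries U <-> V and
   (a, b, X) <-> (c, d, Y) this leaves b, d in U with p in V, and b, p in U
   with d in V.  Refine both separations into nine cells; uncrossing with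
   submodularity, the lower bounds of 3-connectivity, and the bound
   r (X - a) >= 3 (which holds because cl P contains no triangle) rule out
   every pattern of empty, singleton and larger cells outside P. *)

Set Implicit Arguments.
Unset Strict Implicit.
Unset Printing Implicit Defensive.

(* [lia] is slow in the large contexts below; it only needs the arithmetic
   hypotheses. *)
Ltac rank_lia :=
  repeat match goal with H : ?t |- _ =>
    lazymatch t with is_true (leq _ _) => fail | @eq nat _ _ => fail | _ => clear H end
  end; lia.

Section Rank.
Variables (T : finType) (M : matroid T).
Local Notation E := (ground M).
Local Notation r := (rank M).

Lemma rank_setU1 x (A : {set T}) : x \in E -> A \subset E -> r (x |: A) <= r A + 1.
Proof.
move=> xE AE; have x1E : [set x] \subset E by rewrite sub1set.
have := rank_submod x1E AE; have := rank_le_card x1E; rewrite cards1; lia.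
Qed.

Lemma rank_setU_absorb (A B : {set T}) : A \subset E -> B \subset E ->
  r B <= r (A :&: B) -> r (A :|: B) <= r A.
Proof. by move=> AE BE; have := rank_submod AE BE; lia. Qed.

Lemma sub_mclosure (A C P : {set T}) : P \subset E -> C \subset E ->
  A \subset P -> A \subset C -> r C <= r A -> C \subset mclosure M P.
Proof.
move=> PE CE AP AC rCA; apply/subsetP => y yC; have yE := subsetP CE y yC.
rewrite inE yE /= eqn_leq; apply/andP; split; last first.
  by apply: rank_mono; rewrite ?subsetUr // subUset sub1set yE.
have rPC : r (P :|: C) <= r P.
  apply: rank_setU_absorb => //; apply: leq_trans rCA _.
  by apply: rank_mono; [rewrite subsetI AP | exact: subset_trans (subsetIr _ _) CE].
apply: leq_trans rPC; apply: rank_mono; last by rewrite subUset PE.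
by rewrite setUC setUS // sub1set.
Qed.

(* Connectivity is measured with r E rather than r (E - D); the two agree when
   at most two elements are deleted from a 3-connected matroid. *)
Definition del_split (D X Y : {set T}) : Prop :=
  [/\ X \subset E, Y \subset E,
      forall z, z \in E -> (z \in X) + (z \in Y) + (z \in D) = 1 & r X + r Y <= r E + 1].

Lemma ksep_del_split D k A : 1 <= k < 3 -> ksep M (E :\: D) k A ->
  del_split D A ((E :\: D) :\: A).
Proof.
case/andP=> _ k3 /and4P [AD _ _ rAB]; have DE : E :\: D \subset E := subsetDl E D.
split=> [||z zE|]; first exact: subset_trans AD DE.
- exact: subset_trans (subsetDl _ _) DE.
- rewrite !inE zE andbT; case zA: (z \in A); last by case: (z \in D).
  by have := subsetP AD z zA; rewrite inE => /andP [/negbTE ->].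
- by have := rank_mono (subsetDl E D) (subxx E); lia.
Qed.

Lemma del_split_sym D X Y : del_split D X Y -> del_split D Y X.
Proof.
case=> XE YE part rXY; split=> [||z /part|]; rewrite // ?(addnC (r Y)) //.
by rewrite (addnC (z \in Y)).
Qed.

Section ThreeConnected.
Hypotheses (conn : three_connected M) (E_large : 3 < #|E|).

Lemma three_connected_rank k (A : {set T}) : 1 <= k < 3 -> A \subset E ->
  k <= #|A| -> k <= #|E :\: A| -> r E + k <= r A + r (E :\: A).
Proof.
by move=> hk AE kA kB; have := conn A hk; rewrite /ksep AE kA kB /= -leqNgt.
Qed.

Lemma rank_small (A : {set T}) : A \subset E -> #|A| <= 2 -> r A = #|A|.
Proof.
move=> AE A2; apply/eqP; rewrite eqn_leq rank_le_card //=.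
have cD : #|E :\: A| = #|E| - #|A| by rewrite cardsDS.
have rD : r (E :\: A) <= r E by apply: rank_mono; rewrite ?subsetDl.
have [->|A0] := posnP #|A|; first by [].
have := @three_connected_rank #|A| A; rewrite cD; lia.
Qed.

Lemma rank_compl_small (A : {set T}) : A \subset E -> #|A| <= 2 -> r (E :\: A) = r E.
Proof.
move=> AE A2; apply/eqP; rewrite eqn_leq rank_mono ?subsetDl //=.
have cD : #|E :\: A| = #|E| - #|A| by rewrite cardsDS.
have rA := rank_le_card AE.
have [A0|A0] := posnP #|A|; first by rewrite (cards0_eq A0) setD0.
have := @three_connected_rank #|A| A; rewrite cD; lia.
Qed.

Lemma rank2_triangle (C : {set T}) : C \subset E -> #|C| = 3 -> r C <= 2 -> mtriangle M C.
Proof.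
move=> CE C3 rC; rewrite /mtriangle /circuit CE C3 /dependent eqxx andbT /=.
apply/andP; split; first by lia.
apply/forallP => A; apply/implyP => AC; have AE := subset_trans (proper_sub AC) CE.
have := proper_card AC; rewrite C3 => /ltnSE A2.
by rewrite rank_small ?ltnn.
Qed.

Lemma corank_triad (C : {set T}) : C \subset E -> #|C| = 3 -> r (E :\: C) < r E -> mtriad M C.
Proof.
move=> CE C3 rC; rewrite /mtriad /cocircuit /codependent /dual_rank CE C3 eqxx andbT /=.
apply/andP; split; first by lia.
apply/forallP => A; apply/implyP => AC; have AE := subset_trans (proper_sub AC) CE.
have := proper_card AC; rewrite C3 => /ltnSE A2.
by rewrite rank_compl_small // addnK ltnn.
Qed.

End ThreeConnected.
End Rank.

Lemma restr_iso_uniform_rank (T : finType) (M : matroid T) (P : {set T}) k n :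
  restr_iso_uniform M P k n -> forall S : {set T}, S \subset P -> rank M S = minn #|S| k.
Proof.
case=> _ [f [finj fP frk]] S SP.
have fS : f @: (f @^-1: S) = S.
  apply/setP => y; apply/imsetP/idP => [[x] | yS]; first by rewrite inE => fxS ->.
  have : y \in f @: setT by rewrite fP (subsetP SP).
  by case/imsetP => x _ fxy; exists x; rewrite // inE -fxy.
by rewrite -fS frk /uniform_rank card_imset.
Qed.

Lemma restr_iso_uniform_card (T : finType) (M : matroid T) (P : {set T}) k n :
  restr_iso_uniform M P k n -> #|P| = n.
Proof. by case=> _ [f [finj <- _]]; rewrite card_imset // cardsT card_ord. Qed.

Lemma set3E (T : finType) (u v w : T) : [set u; v; w] = [set x in [:: u; v; w]].
Proof. by apply/setP => x; rewrite !inE -!orbA. Qed.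

Lemma cards3_le (T : finType) (u v w : T) : #|[set u; v; w]| <= 3.
Proof. by rewrite set3E cardsE card_size. Qed.

Lemma cards3 (T : finType) (u v w : T) : uniq [:: u; v; w] -> #|[set u; v; w]| = 3.
Proof. by move=> uvw; rewrite set3E cardsE (card_uniqP uvw). Qed.

Lemma ksep_compl (T : finType) (M : matroid T) S k (A : {set T}) :
  ksep M S k A -> ksep M S k (S :\: A).
Proof.
case/and4P=> AS kA kB rAB; rewrite /ksep subsetDl kB setDDr setDv set0U.
by rewrite (setIidPr AS) kA addnC.
Qed.

Lemma ksep_of_not_three_connected (T : finType) (M : matroid T) S :
  ~ three_connected_on M S -> exists k A, 1 <= k < 3 /\ ksep M S k A.
Proof.
move=> notconn; have [/existsP [A /orP [sep1 | sep2]] | none] :=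
  boolP [exists A, ksep M S 1 A || ksep M S 2 A]; [by exists 1, A | by exists 2, A |].
case: notconn => [] [|[|[|k]]] A //= _; apply/negP => sep; case/existsP: none.
  by exists A; rewrite sep.
by exists A; rewrite sep orbT.
Qed.

(** * 3-connected matroids with a U_{3,5}-restriction *)

Section U35.
Variables (T : finType) (M : matroid T) (P : {set T}).
Local Notation E := (ground M).
Local Notation r := (rank M).
Hypotheses (conn : three_connected M) (PE : P \subset E).
Hypotheses (rank_subP : forall S : {set T}, S \subset P -> r S = minn #|S| 3) (card_P : #|P| = 5).
Hypothesis triangle_free : forall C : {set T}, C \subset mclosure M P -> ~~ mtriangle M C.
Hypothesis triad_free : forall C : {set T}, C \subset P -> ~~ mtriad M C.

Lemma card_ground_gt3 : 3 < #|E|.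
Proof. by apply: leq_trans (subset_leq_card PE); rewrite card_P. Qed.

Lemma rank_P : r P = 3.
Proof. by rewrite rank_subP // card_P. Qed.

Lemma rank_setU_P (A : {set T}) : A \subset E -> 2 < #|A :&: P| -> r (A :|: P) <= r A.
Proof.
move=> AE AP3; apply: rank_setU_absorb => //.
by rewrite rank_P rank_subP ?subsetIr //; lia.
Qed.

(* Otherwise A spans P, which contains D, and A :|: D separates M. *)
Lemma ksep_meets_P (D A : {set T}) k : D \subset P -> 1 <= k < 3 ->
  ksep M (E :\: D) k A -> #|A :&: P| <= 2.
Proof.
move=> DP hk /and4P [AS kA kB rAB]; rewrite leqNgt; apply/negP => AP3.
have AE := subset_trans AS (subsetDl E D); have DE := subset_trans DP PE.
have AD_E : A :|: D \subset E by rewrite subUset AE.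
have compl : E :\: (A :|: D) = (E :\: D) :\: A by rewrite setDDl setUC.
have rAD : r (A :|: D) <= r A.
  apply: leq_trans (rank_setU_P AE AP3); apply: rank_mono; last by rewrite subUset AE.
  exact: setUS.
have rS : r (E :\: D) <= r E by apply: rank_mono; rewrite ?subsetDl.
have := @three_connected_rank _ M conn k (A :|: D) hk AD_E.
rewrite compl kB (leq_trans kA (subset_leq_card (subsetUl A D))) => /(_ isT isT).
by lia.
Qed.

Lemma rank_compl_subP (C : {set T}) : C \subset P -> #|C| <= 3 -> r (E :\: C) = r E.
Proof.
move=> CP C3; have CE := subset_trans CP PE; have E4 := card_ground_gt3.
have [C2 | C3'] : #|C| <= 2 \/ #|C| = 3 by lia.
  exact: rank_compl_small.
apply/eqP; rewrite eqn_leq rank_mono ?subsetDl //= leqNgt; apply/negP => rC.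
by have := triad_free CP; rewrite corank_triad.
Qed.

(* For z outside P, E - {a, c, z} still contains three elements of P, so it
   spans E - z. *)
Lemma rank_compl_pair_point (a c z : T) : a \in P -> c \in P -> z \in E ->
  r E <= r (E :\: [set a; c; z]).
Proof.
move=> aP cP zE; have [zP | zNP] := boolP (z \in P).
  rewrite rank_compl_subP ?cards3_le //.
  by apply/subsetP => y; rewrite !inE -!orbA => /or3P [] /eqP ->.
set V := E :\: [set a; c; z].
have VE : V \subset E by apply: subsetDl.
have VP : V :&: P = P :\: [set a; c].
  apply/setP => y; rewrite !inE; have [-> | yz] := eqVneq y z.
    by rewrite (negbTE zNP) !andbF.
  by case yP: (y \in P); rewrite ?andbF //= (subsetP PE y yP) orbF !andbT.
have VUP : V :|: P = E :\ z.
  apply/setP => y; rewrite !inE; have [-> | yz] := eqVneq y z.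
    by rewrite (negbTE zNP) orbT.
  case yP: (y \in P); first by rewrite orbT (subsetP PE y yP).
  have ya : y != a by apply: contraFneq yP => ->.
  have yc : y != c by apply: contraFneq yP => ->.
  by rewrite (negbTE ya) (negbTE yc) ?(negbTE yz) /= ?orbF.
have rVP : r (V :&: P) = 3.
  rewrite VP rank_subP ?subsetDl // cardsD (setIidPr _) ?card_P; last first.
    by apply/subsetP => y; rewrite !inE => /orP [] /eqP ->.
  by rewrite cards2; case: (a != c).
have rEz : r (E :\ z) = r E by rewrite rank_compl_small ?card_ground_gt3 ?sub1set ?cards1.
by have := rank_submod VE PE; rewrite VUP rEz rVP rank_P; lia.
Qed.

Lemma rank_pair_point (u v x : T) : u \in P -> v \in P -> u != v -> x \in E -> x \notin P ->
  3 <= r [set u; v; x].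
Proof.
move=> uP vP uv xE xNP; rewrite leqNgt; apply/negP; rewrite ltnS => rC.
have ux : u != x by apply: contraNneq xNP => <-.
have vx : v != x by apply: contraNneq xNP => <-.
have CE : [set u; v; x] \subset E.
  by rewrite !subUset !sub1set xE !(subsetP PE).
have C3 : #|[set u; v; x]| = 3 by rewrite cards3 //= !inE negb_or uv ux vx.
have uvP : [set u; v] \subset P by apply/subsetP => y; rewrite !inE => /orP [] /eqP ->.
have ruv : r [set u; v] = 2 by rewrite rank_subP // cards2 uv.
have Ccl : [set u; v; x] \subset mclosure M P.
  apply: (sub_mclosure PE CE uvP); last by rewrite ruv.
  by apply/subsetP => y; rewrite !inE => ->.
have := triangle_free Ccl; rewrite rank2_triangle ?card_ground_gt3 //.
Qed.


Section DeletionSplit.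
Variables (a b c d p : T) (X Y : {set T}).
Hypotheses (pP : p \in P) (sXY : del_split M [set p] X Y).
Hypotheses (XP : X :&: P = [set a; b]) (YP : Y :&: P = [set c; d]) (ab : a != b) (cd : c != d).

Let XE : X \subset E. Proof. by case: sXY. Qed.
Let YE : Y \subset E. Proof. by case: sXY. Qed.
Let rXY : r X + r Y <= r E + 1. Proof. by case: sXY. Qed.
Let partXY z : z \in E -> (z \in X) + (z \in Y) + (z == p) = 1.
Proof. by case: sXY => _ _ part _ /part; rewrite in_set1. Qed.

Lemma mem_split : [/\ a \in X :&: P, b \in X :&: P, c \in Y :&: P & d \in Y :&: P].
Proof. by rewrite XP YP !inE !eqxx !orbT. Qed.

Lemma notin_splitX z : z \in X -> (z \notin Y) && (z != p).
Proof.
by move=> zX; move: (partXY (subsetP XE z zX)); rewrite zX; case: (z \in Y); case: (z == p).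
Qed.

Lemma notin_splitY z : z \in Y -> (z \notin X) && (z != p).
Proof.
by move=> zY; move: (partXY (subsetP YE z zY)); rewrite zY; case: (z \in X); case: (z == p).
Qed.

Lemma P_split : P = [set a; b; c; d; p].
Proof.
apply/setP => y; rewrite !inE; apply/idP/idP => [yP | ]; last first.
  by case: mem_split; rewrite !inE => /andP [_ ?] /andP [_ ?] /andP [_ ?] /andP [_ ?];
    move=> /orP [/orP [/orP [/orP []|]|]|] /eqP ->.
have yE := subsetP PE y yP; move: (partXY yE).
case yX: (y \in X).
  have : y \in X :&: P by rewrite inE yX.
  by rewrite XP !inE => /orP [] ->; rewrite ?orbT.
case yY: (y \in Y).
  have : y \in Y :&: P by rewrite inE yY.
  by rewrite YP !inE => /orP [] ->; rewrite ?orbT.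
by case: (y == p); rewrite ?orbT.
Qed.

Lemma p_notin_split : (p \notin X) && (p \notin Y).
Proof. by move: (partXY (subsetP PE p pP)); rewrite eqxx; case: (p \in X); case: (p \in Y). Qed.

Lemma uniq_split : uniq [:: a; b; c; d; p].
Proof.
have [/setIP [aX _] /setIP [bX _] /setIP [cY _] /setIP [dY _]] := mem_split.
have neqXY x y : x \in X -> y \in Y -> x != y.
  by move=> /notin_splitX /andP [xNY _] yY; apply: contraNneq xNY => ->.
have /andP [_ ap] := notin_splitX aX; have /andP [_ bp] := notin_splitX bX.
have /andP [_ cp] := notin_splitY cY; have /andP [_ dp] := notin_splitY dY.
by rewrite /= !inE !negb_or ab cd ap bp cp dp !neqXY.
Qed.

Lemma split_labelling : uniq [:: a; b; c; d] /\ [set a; b; c; d] = P :\ p.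
Proof.
have := uniq_split.
rewrite -[[:: a; b; c; d; p]]/([:: a; b; c; d] ++ [:: p]) cat_uniq /= orbF.
case/and3P=> uabcd pNabcd _; split=> //.
apply/setP => z; rewrite P_split !inE; have [-> | zp] := eqVneq z p.
  by apply/negbTE; move: pNabcd; rewrite !inE -!orbA.
by rewrite orbF -!orbA.
Qed.

Lemma exists_split_notin_P : exists2 x, x \in X & x \notin P.
Proof.
have [/existsP [x /andP [xX xNP]] | none] := boolP [exists x in X, x \notin P]; first by exists x.
have XabP : X = [set a; b].
  rewrite -XP; apply/esym/setIidPl/subsetP => x xX.
  by apply: contraR none => xNP; apply/existsP; exists x; rewrite xX.
have [/setIP [_ aP] /setIP [_ bP] _ _] := mem_split.
have abpP : [set a; b; p] \subset P by rewrite !subUset !sub1set aP bP pP.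
have YE' : E :\: [set a; b; p] = Y.
  apply/setP => y; rewrite -XabP !inE; case yE: (y \in E); last first.
    by rewrite andbF; apply/esym/negP => /(subsetP YE); rewrite yE.
  by move: (partXY yE); case: (y \in X); case: (y \in Y); case: (y == p).
have := rank_compl_subP abpP (cards3_le a b p); rewrite YE' => rYE.
have rX : r X = 2 by rewrite XabP rank_subP ?cards2 ?ab // subUset !sub1set aP bP.
by move: rXY; rewrite rYE rX; rank_lia.
Qed.

Lemma rank_split_setD1 : r X <= r (X :\ a).
Proof.
have [x xX xNP] := exists_split_notin_P.
have [/setIP [aX aP] /setIP [bX bP] /setIP [cY cP] /setIP [dY dP]] := mem_split.
have XaE : X :\ a \subset E := subset_trans (subsetDl X [set a]) XE.
have card_Xa : 1 < #|X :\ a|.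
  have xa : x != a by apply: contraNneq xNP => ->.
  have bx : b != x by apply: contraNneq xNP => <-.
  by apply/card_gt1P; exists b, x; rewrite !inE bX xX (eq_sym b) ab xa bx.
have card_Ea : 1 < #|E :\: (X :\ a)|.
  apply/card_gt1P; exists a, p; rewrite !inE eqxx (subsetP PE a aP) (subsetP PE p pP).
  have /andP [pX _] := p_notin_split.
  by have /andP [_ ap] := notin_splitX aX; rewrite (eq_sym p) ap /= (negbTE pX).
have pYE : p |: Y \subset E by rewrite subUset sub1set (subsetP PE p pP) YE.
have pY_P : 2 < #|(p |: Y) :&: P|.
  have cdp : uniq [:: c; d; p] by case/andP: uniq_split => _ /andP [].
  apply: leq_trans (subset_leq_card (_ : [set c; d; p] \subset _)); first by rewrite cards3.
  by rewrite !subUset !sub1set !inE !eqxx cY dY cP dP pP !orbT.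
have rEXa : r (E :\: (X :\ a)) <= r (p |: Y).
  apply: leq_trans (rank_setU_P pYE pY_P); apply: rank_mono; last by rewrite subUset pYE.
  apply/subsetP => y; rewrite !inE => /andP [yXa yE]; have [-> | ya] := eqVneq y a.
    by rewrite aP orbT.
  move: yXa (partXY yE); rewrite ya /=.
  by case: (y \in X); case: (y \in Y); case: (y == p).
have := rank_setU1 (subsetP PE p pP) YE.
have := three_connected_rank conn (isT : 1 <= 2 < 3) XaE card_Xa card_Ea.
by move: rXY rEXa; rank_lia.
Qed.

Lemma rank_split_setD1_ge3 : 3 <= r (X :\ a).
Proof.
have [x xX xNP] := exists_split_notin_P.
have [/setIP [aX aP] /setIP [bX bP] _ _] := mem_split.
have abxX : [set a; b; x] \subset X by rewrite !subUset !sub1set aX bX xX.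
apply: leq_trans rank_split_setD1.
apply: leq_trans (rank_pair_point aP bP ab (subsetP XE x xX) xNP) _.
exact: rank_mono abxX XE.
Qed.

End DeletionSplit.

(** * Uncrossing the separations of M\p and M\a\c *)

Section Uncrossing.
Variables (a b c d p : T) (X Y U V : {set T}).
Hypotheses (pP : p \in P) (sXY : del_split M [set p] X Y).
Hypotheses (XP : X :&: P = [set a; b]) (YP : Y :&: P = [set c; d]) (ab : a != b) (cd : c != d).
Hypotheses (sUV : del_split M [set a; c] U V) (V2 : 1 < #|V|).

Let partXY z : z \in E -> (z \in X) + (z \in Y) + (z == p) = 1.
Proof. by case: sXY => _ _ part _ /part; rewrite in_set1. Qed.
Let partUV z : z \in E -> (z \in U) + (z \in V) + ((z == a) || (z == c)) = 1.
Proof. by case: sUV => _ _ part _ /part; rewrite in_set2. Qed.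
Let UE : U \subset E. Proof. by case: sUV. Qed.
Let VE : V \subset E. Proof. by case: sUV. Qed.
Let P_eq : P = [set a; b; c; d; p] := P_split pP sXY XP YP.
Let uniqP : uniq [:: a; b; c; d; p] := uniq_split sXY XP YP ab cd.
Let sYX := del_split_sym sXY.

(* The nine cells of the common refinement of the partitions (X, Y, {p}) and
   (U, V, {a}, {c}) of E: the five elements of P, then the elements outside P
   in U :&: X, U :&: Y, V :&: X and V :&: Y. *)
Definition cell z :=
  if z == a then 0 else if z == b then 1 else if z == c then 2 else if z == d then 3
  else if z == p then 4 else if z \in U then (if z \in X then 5 else 6)
  else if z \in X then 7 else 8.

Variant cell_spec z : nat -> Prop :=
  | CellA of z = a : cell_spec z 0
  | CellB of z = b : cell_spec z 1
  | CellC of z = c : cell_spec z 2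
  | CellD of z = d : cell_spec z 3
  | CellP of z = p : cell_spec z 4
  | CellUX of z \in U & z \in X & z \notin P : cell_spec z 5
  | CellUY of z \in U & z \in Y & z \notin P : cell_spec z 6
  | CellVX of z \in V & z \in X & z \notin P : cell_spec z 7
  | CellVY of z \in V & z \in Y & z \notin P : cell_spec z 8.

Lemma cellP z : z \in E -> cell_spec z (cell z).
Proof.
move=> zE; rewrite /cell.
case: eqP => [->|za]; first by constructor.
case: eqP => [->|zb]; first by constructor.
case: eqP => [->|zc]; first by constructor.
case: eqP => [->|zd]; first by constructor.
case: eqP => [->|zp]; first by constructor.
have zNP : z \notin P by rewrite P_eq !inE; repeat case: eqP => //=.
move: (partXY zE) (partUV zE); do 3 case: eqP => // _.
by case zU: (z \in U); case zV: (z \in V); case zX: (z \in X); case zY: (z \in Y) => // _ _;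
  constructor.
Qed.

Lemma cell_lt9 z : cell z < 9.
Proof. by rewrite /cell; do 5 case: (_ == _) => //; do 2 case: (_ \in _). Qed.

Lemma cellE : [/\ cell a = 0, cell b = 1, cell c = 2, cell d = 3 & cell p = 4].
Proof.
move: uniqP; rewrite /= !inE !negb_or.
move=> /and5P [/and4P [ab' ac ad ap] /and3P [bc bd bp] /andP [cd' cp] dp _].
by rewrite /cell !eqxx !ifN_eqC.
Qed.

Lemma mem_iota_cell z : cell z \in iota 0 9.
Proof. by rewrite mem_iota cell_lt9. Qed.

Definition cells (s : seq nat) := [set z in E | cell z \in s].
Local Notation rk s := (r (cells s)).
Definition ncell l := #|cells [:: l]|.
Local Notation ncells s := (sumn (map ncell s)).

Lemma cells_sub s : cells s \subset E.
Proof. by apply/subsetP => z; rewrite inE => /andP []. Qed.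

Lemma cells_eq (A : {set T}) s : A \subset E ->
  (forall z, z \in E -> (z \in A) = (cell z \in s)) -> A = cells s.
Proof.
move=> AE memA; apply/setP => z; rewrite inE; case zE: (z \in E); first by rewrite memA.
by apply/negP => /(subsetP AE); rewrite zE.
Qed.

Lemma rk_submod s t u w : all (fun l => ((l \in u) == (l \in s) || (l \in t)) &&
    ((l \in w) == (l \in s) && (l \in t))) (iota 0 9) ->
  rk u + rk w <= rk s + rk t.
Proof.
move=> /allP st; have {}st z := st (cell z) (mem_iota_cell z).
have -> : cells u = cells s :|: cells t.
  by apply/setP => z; rewrite !inE; case/andP: (st z) => /eqP -> _; case: (z \in E).
have -> : cells w = cells s :&: cells t.
  by apply/setP => z; rewrite !inE; case/andP: (st z) => _ /eqP ->; case: (z \in E).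
exact: rank_submod (cells_sub s) (cells_sub t).
Qed.

Lemma rk_mono s t : all (fun l => (l \in s) ==> (l \in t)) (iota 0 9) -> rk s <= rk t.
Proof.
move=> /allP st; apply: rank_mono (cells_sub t); apply/subsetP => z; rewrite !inE.
by case/andP=> -> /(implyP (st _ (mem_iota_cell z))).
Qed.

Lemma rk_full : rk [:: 0; 1; 2; 3; 4; 5; 6; 7; 8] = r E.
Proof.
congr (r _); apply/setP => z; rewrite inE.
by have := cell_lt9 z; case: (cell z) => [|[|[|[|[|[|[|[|[|]]]]]]]]]; rewrite ?andbT.
Qed.

Lemma card_cells s : uniq s -> #|cells s| = ncells s.
Proof.
elim: s => [_ | l s IH /= /andP [ls us]].
  by apply/eqP; rewrite cards_eq0; apply/eqP/setP => z; rewrite !inE andbF.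
have -> : cells (l :: s) = cells [:: l] :|: cells s.
  by apply/setP => z; rewrite !inE -andb_orr.
rewrite cardsU -IH //.
have -> : cells [:: l] :&: cells s = set0.
  apply/setP => z; rewrite !inE; case: (z \in E) => //=.
  by case: eqP => // ->; rewrite (negbTE ls).
by rewrite cards0 subn0.
Qed.

Lemma rk_le_ncell l : rk [:: l] <= ncell l.
Proof. exact: rank_le_card (cells_sub _). Qed.

Lemma rk_subadd s t : rk (s ++ t) <= rk s + rk t.
Proof.
have -> : cells (s ++ t) = cells s :|: cells t.
  by apply/setP => z; rewrite !inE mem_cat andb_orr.
by have := rank_submod (cells_sub s) (cells_sub t); lia.
Qed.

Lemma cell_lt5 z : z \in E -> cell z < 5 -> z \in P.
Proof.
move=> zE; case: (cellP zE) => [->|->|->|->|->|_ _ _|_ _ _|_ _ _|_ _ _] //.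
all: by rewrite P_eq !inE eqxx ?orbT.
Qed.

Lemma ncellP l : l < 5 -> ncell l = 1.
Proof.
move=> l5; apply/eqP/cards1P; exists (nth a [:: a; b; c; d; p] l).
apply/setP => z; rewrite !inE; apply/andP/eqP => [[zE /eqP zl] | ->].
  by case: (cellP zE) zl l5 => [->|->|->|->|->|_ _ _|_ _ _|_ _ _|_ _ _] <-.
have [ca cb cc cd' cp] := cellE.
case: l l5 => [|[|[|[|[|]]]]] //= _; rewrite ?ca ?cb ?cc ?cd' ?cp;
  by split=> //; apply: (subsetP PE); rewrite P_eq !inE eqxx ?orbT.
Qed.

Lemma ncells_P t : all (fun l => l < 5) t -> ncells t = size t.
Proof. by elim: t => //= l t IH /andP [l5 t5]; rewrite ncellP // IH. Qed.

Lemma rk_absorb s t : 2 < count (mem s) (iota 0 5) ->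
  all (fun l => (l \in t) ==> (l \in s) || (l < 5)) (iota 0 9) -> rk t <= rk s.
Proof.
move=> s3 /allP ts; set q := [seq l <- iota 0 5 | l \in s].
have card_q : #|cells q| = count (mem s) (iota 0 5).
  rewrite card_cells ?filter_uniq ?iota_uniq // -size_filter ncells_P //.
  by apply/allP => l; rewrite mem_filter mem_iota => /andP [_ /andP []].
have qP : cells q \subset cells s :&: P.
  apply/subsetP => z; rewrite !inE mem_filter mem_iota => /andP [zE /andP [zs /andP [_ z5]]].
  by rewrite zE zs cell_lt5.
have sP : 2 < #|cells s :&: P| by rewrite (leq_trans _ (subset_leq_card qP)) ?card_q.
apply: leq_trans (rank_setU_P (cells_sub s) sP); apply: rank_mono; last first.
  by rewrite subUset cells_sub PE.
apply/subsetP => z; rewrite !inE => /andP [zE zt].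
case/orP: (implyP (ts _ (mem_iota_cell z)) zt) => [-> | /(cell_lt5 zE) ->].
all: by rewrite ?zE ?orbT.
Qed.

Lemma rk_sep s t : perm_eq (s ++ t) (iota 0 9) ->
  1 < ncells s -> 1 < ncells t -> r E + 2 <= rk s + rk t.
Proof.
move=> st; have := perm_uniq st; rewrite iota_uniq cat_uniq => /and3P [us /hasPn nst ut].
rewrite -!card_cells //.
have -> : cells t = E :\: cells s.
  apply/setP => z; rewrite !inE; case zE: (z \in E); rewrite ?andbF //= andbT.
  have := mem_iota_cell z; rewrite -(perm_mem st) mem_cat.
  by case zt: (cell z \in t); [rewrite (negbTE (nst _ zt)) | rewrite orbF => ->].
by move=> s2 t2; apply: (three_connected_rank conn (k := 2)) (cells_sub s) s2 t2.
Qed.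

Lemma cells_X : X = cells [:: 0; 1; 5; 7].
Proof.
have [/setIP [aX _] /setIP [bX _] /setIP [cY _] /setIP [dY _]] := mem_split XP YP.
have XNY z : z \in Y -> z \notin X by case/(notin_splitY sXY)/andP.
case/andP: (p_notin_split pP sXY) => pX _.
apply: cells_eq => [|z zE]; first by case: sXY.
by case: (cellP zE) => [->|->|->|->|->|_ ->|_ /XNY/negbTE->|_ ->|_ /XNY/negbTE->] //;
  rewrite ?aX ?bX ?(negbTE (XNY _ cY)) ?(negbTE (XNY _ dY)) ?(negbTE pX).
Qed.

Lemma cells_Y : Y = cells [:: 2; 3; 6; 8].
Proof.
have [/setIP [aX _] /setIP [bX _] /setIP [cY _] /setIP [dY _]] := mem_split XP YP.
have YNX z : z \in X -> z \notin Y by case/(notin_splitX sXY)/andP.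
case/andP: (p_notin_split pP sXY) => _ pY.
apply: cells_eq => [|z zE]; first by case: sXY.
by case: (cellP zE) => [->|->|->|->|->|_ /YNX/negbTE->|_ ->|_ /YNX/negbTE->|_ ->] //;
  rewrite ?cY ?dY ?(negbTE (YNX _ aX)) ?(negbTE (YNX _ bX)) ?(negbTE pY).
Qed.

Lemma cell_inj y z : y \in E -> z \in E -> cell y = cell z -> cell z < 5 -> y = z.
Proof.
move=> yE zE yz z5; have : #|cells [:: cell z]| <= 1 by rewrite -/(ncell _) ncellP.
by move/card_le1_eqP; apply; rewrite !inE ?yE ?zE ?yz eqxx.
Qed.

Lemma cells_setD1 l s z : z \in E -> cell z = l -> l < 5 ->
  cells (l :: s) :\ z = cells [seq k <- s | k != l].
Proof.
move=> zE zl l5; apply/setP => y; rewrite !inE mem_filter.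
case yE: (y \in E); rewrite ?andbF //=.
have [yl | yl] := eqVneq (cell y) l.
  have -> : y = z by apply: cell_inj; rewrite ?yl ?zl.
  by rewrite eqxx.
have yz : y != z by apply: contraNneq yl => ->; rewrite zl.
by rewrite yz.
Qed.


Lemma rk_XY : rk [:: 0; 1; 5; 7] + rk [:: 2; 3; 6; 8] <= r E + 1.
Proof. by rewrite -cells_X -cells_Y; case: sXY. Qed.

Lemma rk_Xa : rk [:: 0; 1; 5; 7] <= rk [:: 1; 5; 7] /\ 3 <= rk [:: 1; 5; 7].
Proof.
have [/setIP [_ /(subsetP PE) aE] _ _ _] := mem_split XP YP; have [ca _ _ _ _] := cellE.
rewrite -[[:: 1; 5; 7]]/[seq k <- [:: 1; 5; 7] | k != 0] -(cells_setD1 _ aE ca) // -cells_X.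
by split; [apply: rank_split_setD1 sXY XP YP ab cd | apply: rank_split_setD1_ge3 sXY XP YP ab cd].
Qed.

Lemma rk_Yc : rk [:: 2; 3; 6; 8] <= rk [:: 3; 6; 8] /\ 3 <= rk [:: 3; 6; 8].
Proof.
have [_ _ /setIP [_ /(subsetP PE) cE] _] := mem_split XP YP; have [_ _ cc _ _] := cellE.
rewrite -[[:: 3; 6; 8]]/[seq k <- [:: 3; 6; 8] | k != 2] -(cells_setD1 _ cE cc) // -cells_Y.
by split; [apply: rank_split_setD1 sYX YP XP cd ab | apply: rank_split_setD1_ge3 sYX YP XP cd ab].
Qed.

Lemma ncell_gt0 z : z \in E -> 0 < ncell (cell z).
Proof. by move=> zE; apply/card_gt0P; exists z; rewrite !inE zE eqxx. Qed.

Lemma ncell_nonP_X : 0 < ncell 5 + ncell 7.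
Proof.
have [x] := exists_split_notin_P pP sXY XP YP ab.
rewrite cells_X inE => /andP [xE xc] xNP; have := ncell_gt0 xE.
have : 4 < cell x by rewrite ltnNge; apply: contra xNP => /(cell_lt5 xE).
by move: xc; rewrite !inE => /or4P [] /eqP ->; rank_lia.
Qed.

Lemma ncell_nonP_Y : 0 < ncell 6 + ncell 8.
Proof.
have [y] := exists_split_notin_P pP sYX YP XP cd.
rewrite cells_Y inE => /andP [yE yc] yNP; have := ncell_gt0 yE.
have : 4 < cell y by rewrite ltnNge; apply: contra yNP => /(cell_lt5 yE).
by move: yc; rewrite !inE => /or4P [] /eqP ->; rank_lia.
Qed.

Lemma UNV z : z \in U -> z \notin V.
Proof.
by move=> zU; move: (partUV (subsetP UE z zU)); rewrite zU; case: (z \in V).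
Qed.

Lemma VNU z : z \in V -> z \notin U.
Proof.
by move=> zV; move: (partUV (subsetP VE z zV)); rewrite zV; case: (z \in U).
Qed.

Lemma ac_notin_UV : [/\ a \notin U, a \notin V, c \notin U & c \notin V].
Proof.
have [/setIP [_ /(subsetP PE) aE] _ /setIP [_ /(subsetP PE) cE] _] := mem_split XP YP.
move: (partUV aE) (partUV cE); rewrite !eqxx orbT.
by case: (a \in U); case: (a \in V); case: (c \in U); case: (c \in V).
Qed.

Lemma cells_U s : (b \in U) = (1 \in s) -> (d \in U) = (3 \in s) -> (p \in U) = (4 \in s) ->
  all (fun l => (l \in s) == (l \in [:: 5; 6])) [:: 0; 2; 5; 6; 7; 8] -> U = cells s.
Proof.
move=> bU dU pU /allP hs; have h l : l \in [:: 0; 2; 5; 6; 7; 8] -> (l \in s) = (l \in [:: 5; 6]).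
  by move/hs/eqP.
have [aU _ cU _] := ac_notin_UV.
apply: cells_eq => [|z zE]; first by [].
by case: (cellP zE) => [->|->|->|->|->|zU _ _|zU _ _|/VNU zU _ _|/VNU zU _ _] //;
  rewrite h ?inE //= ?(negbTE aU) ?(negbTE cU) ?zU ?(negbTE zU).
Qed.

Lemma cells_V s : (b \in V) = (1 \in s) -> (d \in V) = (3 \in s) -> (p \in V) = (4 \in s) ->
  all (fun l => (l \in s) == (l \in [:: 7; 8])) [:: 0; 2; 5; 6; 7; 8] -> V = cells s.
Proof.
move=> bV dV pV /allP hs; have h l : l \in [:: 0; 2; 5; 6; 7; 8] -> (l \in s) = (l \in [:: 7; 8]).
  by move/hs/eqP.
have [_ aV _ cV] := ac_notin_UV.
apply: cells_eq => [|z zE]; first by [].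
by case: (cellP zE) => [->|->|->|->|->|/UNV zV _ _|/UNV zV _ _|zV _ _|zV _ _] //;
  rewrite h ?inE //= ?(negbTE aV) ?(negbTE cV) ?zV ?(negbTE zV).
Qed.

Lemma ncellE : [/\ ncell 0 = 1, ncell 1 = 1, ncell 2 = 1, ncell 3 = 1 & ncell 4 = 1].
Proof. by split; apply: ncellP. Qed.

Lemma rk_small s : uniq s -> ncells s <= 2 -> rk s = ncells s.
Proof.
by move=> us s2; rewrite -card_cells // rank_small ?cells_sub ?card_cells ?card_ground_gt3.
Qed.

Section Crossing_bdU_pV.
Hypotheses (bU : b \in U) (dU : d \in U) (pV : p \in V).

Let U_eq : U = cells [:: 1; 3; 5; 6].
Proof. by apply: cells_U; rewrite ?bU ?dU ?(negbTE (VNU pV)). Qed.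
Let V_eq : V = cells [:: 4; 7; 8].
Proof. by apply: cells_V; rewrite ?pV ?(negbTE (UNV bU)) ?(negbTE (UNV dU)). Qed.

Lemma rk_UV_bdU : rk [:: 1; 3; 5; 6] + rk [:: 4; 7; 8] <= r E + 1.
Proof. by rewrite -U_eq -V_eq; case: sUV. Qed.

Lemma ncells_V_bdU : 1 < ncells [:: 4; 7; 8].
Proof. by rewrite -card_cells // -V_eq. Qed.

(* In each case the contradiction is a linear combination of submodularity
   ([rk_submod], [rk_absorb]), 3-connectivity ([rk_sep]) and the bounds given by
   the two separations; [lia] also does the case analysis on the sizes
   [ncell l] of the cells. *)
Lemma bdU_UX_VY : 0 < ncell 5 -> 0 < ncell 8 -> False.
Proof.
move=> n5 n8; have [n0 n1 n2 n3 n4] := ncellE.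
have [rXa _] := rk_Xa; have [rYc _] := rk_Yc; have rXY := rk_XY; have rUV := rk_UV_bdU.
have := @rk_submod [:: 1; 3; 5; 6] [:: 1; 5; 7] [:: 1; 3; 5; 6; 7] [:: 1; 5] isT.
have := @rk_submod [:: 1; 3; 5; 6; 7] [:: 0; 1; 5; 7] [:: 0; 1; 3; 5; 6; 7] [:: 1; 5; 7] isT.
have := @rk_absorb [:: 0; 1; 3; 5; 6; 7] [:: 0; 1; 2; 3; 5; 6; 7] isT isT.
have := @rk_submod [:: 4; 7; 8] [:: 3; 4; 6; 8] [:: 3; 4; 6; 7; 8] [:: 4; 8] isT.
have := @rk_submod [:: 3; 4; 6; 7; 8] [:: 2; 3; 6; 8] [:: 2; 3; 4; 6; 7; 8] [:: 3; 6; 8] isT.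
have := @rk_absorb [:: 2; 3; 4; 6; 7; 8] [:: 0; 2; 3; 4; 6; 7; 8] isT isT.
have := @rk_sep [:: 4; 8] [:: 0; 1; 2; 3; 5; 6; 7] isT.
have := @rk_sep [:: 1; 5] [:: 0; 2; 3; 4; 6; 7; 8] isT.
have := @rk_submod [:: 3; 6; 8] [:: 4] [:: 3; 4; 6; 8] [::] isT.
have := rk_le_ncell 4.
have := @rk_mono [:: 3; 6; 8] [:: 2; 3; 6; 8] isT.
have := @rk_mono [:: 1; 5; 7] [:: 0; 1; 5; 7] isT.
rewrite /=; rank_lia.
Qed.

Lemma bdU_VX_UY : 0 < ncell 7 -> 0 < ncell 6 -> False.
Proof.
move=> n7 n6; have [n0 n1 n2 n3 n4] := ncellE.
have [rXa _] := rk_Xa; have [rYc _] := rk_Yc; have rXY := rk_XY; have rUV := rk_UV_bdU.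
have := @rk_submod [:: 1; 3; 5; 6] [:: 3; 6; 8] [:: 1; 3; 5; 6; 8] [:: 3; 6] isT.
have := @rk_submod [:: 1; 3; 5; 6; 8] [:: 2; 3; 6; 8] [:: 1; 2; 3; 5; 6; 8] [:: 3; 6; 8] isT.
have := @rk_absorb [:: 1; 2; 3; 5; 6; 8] [:: 0; 1; 2; 3; 5; 6; 8] isT isT.
have := @rk_submod [:: 4; 7; 8] [:: 1; 4; 5; 7] [:: 1; 4; 5; 7; 8] [:: 4; 7] isT.
have := @rk_submod [:: 1; 4; 5; 7; 8] [:: 0; 1; 5; 7] [:: 0; 1; 4; 5; 7; 8] [:: 1; 5; 7] isT.
have := @rk_absorb [:: 0; 1; 4; 5; 7; 8] [:: 0; 1; 2; 4; 5; 7; 8] isT isT.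
have := @rk_sep [:: 4; 7] [:: 0; 1; 2; 3; 5; 6; 8] isT.
have := @rk_sep [:: 3; 6] [:: 0; 1; 2; 4; 5; 7; 8] isT.
have := @rk_submod [:: 1; 5; 7] [:: 4] [:: 1; 4; 5; 7] [::] isT.
have := rk_le_ncell 4.
have := @rk_mono [:: 3; 6; 8] [:: 2; 3; 6; 8] isT.
have := @rk_mono [:: 1; 5; 7] [:: 0; 1; 5; 7] isT.
rewrite /=; rank_lia.
Qed.

Lemma bdU_U_pair : ncell 5 = 0 -> ncell 6 = 0 -> False.
Proof.
move=> n5 n6; have [n0 n1 n2 n3 n4] := ncellE.
have [_ rXa3] := rk_Xa; have rXY := rk_XY; have rUV := rk_UV_bdU; have nX := ncell_nonP_X.
have := @rk_small [:: 1; 3] isT; have := @rk_mono [:: 1; 3] [:: 1; 3; 5; 6] isT.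
have := @rk_submod [:: 4; 7; 8] [:: 0; 1; 5; 7] [:: 0; 1; 4; 5; 7; 8] [:: 7] isT.
have := @rk_absorb [:: 0; 1; 4; 5; 7; 8] [:: 0; 1; 2; 3; 4; 5; 7; 8] isT isT.
have := @rk_submod [:: 0; 1; 2; 3; 4; 5; 7; 8] [:: 6] [:: 0; 1; 2; 3; 4; 5; 6; 7; 8] [::] isT.
have := rk_full; have := rk_le_ncell 6.
have := rk_subadd [:: 1] [:: 5; 7]; have := rk_subadd [:: 5] [:: 7].
have := rk_le_ncell 1; have := rk_le_ncell 5; have := rk_le_ncell 7.
have := @rk_sep [:: 7] [:: 0; 1; 2; 3; 4; 5; 6; 8] isT.
have := @rk_absorb [:: 0; 2; 3; 5; 6; 8] [:: 0; 1; 2; 3; 4; 5; 6; 8] isT isT.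
have := @rk_submod [:: 2; 3; 6; 8] [:: 0; 5] [:: 0; 2; 3; 5; 6; 8] [::] isT.
have := rk_subadd [:: 0] [:: 5]; have := rk_le_ncell 0.
rewrite /=; rank_lia.
Qed.

Lemma crossing_bdU_pV : False.
Proof.
have := bdU_UX_VY; have := bdU_VX_UY; have := bdU_U_pair.
have := ncell_nonP_X; have := ncell_nonP_Y; have := ncells_V_bdU; have [_ _ _ _ n4] := ncellE.
rewrite /=; rank_lia.
Qed.

End Crossing_bdU_pV.

Section Crossing_bpU_dV.
Hypotheses (bU : b \in U) (pU : p \in U) (dV : d \in V).

Let U_eq : U = cells [:: 1; 4; 5; 6].
Proof. by apply: cells_U; rewrite ?bU ?pU ?(negbTE (VNU dV)). Qed.
Let V_eq : V = cells [:: 3; 7; 8].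
Proof. by apply: cells_V; rewrite ?dV ?(negbTE (UNV bU)) ?(negbTE (UNV pU)). Qed.

Lemma rk_UV_bpU : rk [:: 1; 4; 5; 6] + rk [:: 3; 7; 8] <= r E + 1.
Proof. by rewrite -U_eq -V_eq; case: sUV. Qed.

Lemma ncells_V_bpU : 1 < ncells [:: 3; 7; 8].
Proof. by rewrite -card_cells // -V_eq. Qed.

Lemma bpU_UX_VY : 0 < ncell 5 -> 0 < ncell 8 -> False.
Proof.
move=> n5 n8; have [n0 n1 n2 n3 n4] := ncellE.
have [rXa _] := rk_Xa; have [rYc _] := rk_Yc; have rXY := rk_XY; have rUV := rk_UV_bpU.
have := @rk_submod [:: 1; 4; 5; 6] [:: 1; 5; 7] [:: 1; 4; 5; 6; 7] [:: 1; 5] isT.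
have := @rk_submod [:: 1; 4; 5; 6; 7] [:: 0; 1; 5; 7] [:: 0; 1; 4; 5; 6; 7] [:: 1; 5; 7] isT.
have := @rk_absorb [:: 0; 1; 4; 5; 6; 7] [:: 0; 1; 2; 4; 5; 6; 7] isT isT.
have := @rk_submod [:: 3; 7; 8] [:: 3; 4; 6; 8] [:: 3; 4; 6; 7; 8] [:: 3; 8] isT.
have := @rk_submod [:: 3; 4; 6; 7; 8] [:: 2; 3; 6; 8] [:: 2; 3; 4; 6; 7; 8] [:: 3; 6; 8] isT.
have := @rk_absorb [:: 2; 3; 4; 6; 7; 8] [:: 0; 2; 3; 4; 6; 7; 8] isT isT.
have := @rk_sep [:: 3; 8] [:: 0; 1; 2; 4; 5; 6; 7] isT.
have := @rk_sep [:: 1; 5] [:: 0; 2; 3; 4; 6; 7; 8] isT.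
have := @rk_submod [:: 3; 6; 8] [:: 4] [:: 3; 4; 6; 8] [::] isT.
have := rk_le_ncell 4.
have := @rk_mono [:: 3; 6; 8] [:: 2; 3; 6; 8] isT.
have := @rk_mono [:: 1; 5; 7] [:: 0; 1; 5; 7] isT.
rewrite /=; rank_lia.
Qed.

Lemma bpU_VX_UY : 1 < ncell 7 -> 0 < ncell 6 -> False.
Proof.
move=> n7 n6; have [n0 n1 n2 n3 n4] := ncellE.
have [rXa _] := rk_Xa; have [rYc _] := rk_Yc; have rXY := rk_XY; have rUV := rk_UV_bpU.
have := @rk_submod [:: 1; 4; 5; 6] [:: 3; 4; 6; 8] [:: 1; 3; 4; 5; 6; 8] [:: 4; 6] isT.
have := @rk_absorb [:: 1; 3; 4; 5; 6; 8] [:: 0; 1; 2; 3; 4; 5; 6; 8] isT isT.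
have := @rk_submod [:: 3; 7; 8] [:: 1; 5; 7] [:: 1; 3; 5; 7; 8] [:: 7] isT.
have := @rk_submod [:: 1; 3; 5; 7; 8] [:: 0; 1; 5; 7] [:: 0; 1; 3; 5; 7; 8] [:: 1; 5; 7] isT.
have := @rk_absorb [:: 0; 1; 3; 5; 7; 8] [:: 0; 1; 2; 3; 4; 5; 7; 8] isT isT.
have := @rk_absorb [:: 0; 1; 3; 5; 7; 8] [:: 0; 1; 2; 3; 5; 7; 8] isT isT.
have := @rk_sep [:: 7] [:: 0; 1; 2; 3; 4; 5; 6; 8] isT.
have := @rk_sep [:: 4; 6] [:: 0; 1; 2; 3; 5; 7; 8] isT.
have := @rk_submod [:: 3; 6; 8] [:: 4] [:: 3; 4; 6; 8] [::] isT.
have := rk_le_ncell 4.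
have := @rk_mono [:: 3; 6; 8] [:: 2; 3; 6; 8] isT.
have := @rk_mono [:: 1; 5; 7] [:: 0; 1; 5; 7] isT.
rewrite /=; rank_lia.
Qed.

Lemma bpU_U_pair : ncell 5 = 0 -> ncell 6 = 0 -> False.
Proof.
move=> n5 n6; have [n0 n1 n2 n3 n4] := ncellE.
have [_ rXa3] := rk_Xa; have rXY := rk_XY; have rUV := rk_UV_bpU; have nX := ncell_nonP_X.
have := @rk_small [:: 1; 4] isT; have := @rk_mono [:: 1; 4] [:: 1; 4; 5; 6] isT.
have := @rk_submod [:: 3; 7; 8] [:: 0; 1; 5; 7] [:: 0; 1; 3; 5; 7; 8] [:: 7] isT.
have := @rk_absorb [:: 0; 1; 3; 5; 7; 8] [:: 0; 1; 2; 3; 4; 5; 7; 8] isT isT.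
have := @rk_submod [:: 0; 1; 2; 3; 4; 5; 7; 8] [:: 6] [:: 0; 1; 2; 3; 4; 5; 6; 7; 8] [::] isT.
have := rk_full; have := rk_le_ncell 6.
have := rk_subadd [:: 1] [:: 5; 7]; have := rk_subadd [:: 5] [:: 7].
have := rk_le_ncell 1; have := rk_le_ncell 5; have := rk_le_ncell 7.
have := @rk_sep [:: 7] [:: 0; 1; 2; 3; 4; 5; 6; 8] isT.
have := @rk_absorb [:: 0; 2; 3; 5; 6; 8] [:: 0; 1; 2; 3; 4; 5; 6; 8] isT isT.
have := @rk_submod [:: 2; 3; 6; 8] [:: 0; 5] [:: 0; 2; 3; 5; 6; 8] [::] isT.
have := rk_subadd [:: 0] [:: 5]; have := rk_le_ncell 0.
rewrite /=; rank_lia.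
Qed.

Lemma bpU_V_pair : ncell 7 = 1 -> ncell 8 = 0 -> False.
Proof.
move=> n7 n8; have [n0 n1 n2 n3 n4] := ncellE.
have [_ rYc3] := rk_Yc; have rXY := rk_XY; have rUV := rk_UV_bpU.
have := @rk_sep [:: 3; 7; 8] [:: 0; 1; 2; 4; 5; 6] isT.
have := @rk_mono [:: 0; 1; 2; 4; 5; 6] [:: 0; 1; 2; 3; 4; 5; 6; 7; 8] isT; have := rk_full.
have := @rk_submod [:: 2; 3; 6; 8] [:: 1; 4; 5; 6] [:: 1; 2; 3; 4; 5; 6; 8] [:: 6] isT.
have := @rk_sep [:: 0; 7] [:: 1; 2; 3; 4; 5; 6; 8] isT.
have := rk_subadd [:: 0] [:: 7]; have := rk_le_ncell 0; have := rk_le_ncell 7.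
have := rk_subadd [:: 3] [:: 6; 8]; have := rk_subadd [:: 6] [:: 8].
have := rk_le_ncell 3; have := rk_le_ncell 6; have := rk_le_ncell 8.
have := @rk_sep [:: 6] [:: 0; 1; 2; 3; 4; 5; 7; 8] isT.
have := @rk_absorb [:: 0; 1; 2; 5; 7; 8] [:: 0; 1; 2; 3; 4; 5; 7; 8] isT isT.
have := @rk_submod [:: 0; 1; 5; 7] [:: 2; 8] [:: 0; 1; 2; 5; 7; 8] [::] isT.
have := rk_subadd [:: 2] [:: 8]; have := rk_le_ncell 2.
rewrite /=; rank_lia.
Qed.

Lemma crossing_bpU_dV : False.
Proof.
have := bpU_UX_VY; have := bpU_VX_UY; have := bpU_U_pair; have := bpU_V_pair.
have := ncell_nonP_X; have := ncell_nonP_Y; have := ncells_V_bpU; have [_ _ _ n3 _] := ncellE.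
have [_ rXa3] := rk_Xa; have := rk_subadd [:: 1] [:: 5; 7]; have := rk_subadd [:: 5] [:: 7].
have := rk_le_ncell 1; have := rk_le_ncell 5; have := rk_le_ncell 7; have [_ n1 _ _ _] := ncellE.
rewrite /=; rank_lia.
Qed.

End Crossing_bpU_dV.
End Uncrossing.

Lemma ksep_del_pair_card_gt1 (a c : T) k (A : {set T}) : a \in P -> c \in P -> 1 <= k < 3 ->
  ksep M (E :\: [set a; c]) k A -> 1 < #|A|.
Proof.
move=> aP cP hk sepA; have /and4P [AD kA _ rAB] := sepA.
rewrite ltnNge; apply/negP => A1; have /cards1P [z Az] : #|A| == 1 by lia.
have zE : z \in E by apply: (subsetP (subset_trans AD (subsetDl _ _))); rewrite Az set11.
have rz : r A = 1 by rewrite rank_small ?card_ground_gt3 ?Az ?cards1 ?sub1set.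
have rD : r (E :\: [set a; c]) <= r E by apply: rank_mono; rewrite ?subsetDl.
have := rank_compl_pair_point aP cP zE; rewrite -setDDl -Az.
by move: rAB; rewrite rz; lia.
Qed.

Lemma del_pair_three_connected (a b c d p : T) (X Y : {set T}) :
  p \in P -> del_split M [set p] X Y -> X :&: P = [set a; b] -> Y :&: P = [set c; d] ->
  a != b -> c != d -> three_connected_del M [set a; c].
Proof.
move=> pP sXY XP YP ab cd k U hk; apply/negP => sepU.
have [/setIP [_ aP] /setIP [_ bP] /setIP [_ cP] /setIP [_ dP]] := mem_split XP YP.
have acP : [set a; c] \subset P by rewrite subUset !sub1set aP cP.
have sepV := ksep_compl sepU; have sUV := ksep_del_split hk sepU.
have U2 := ksep_del_pair_card_gt1 aP cP hk sepU; have V2 := ksep_del_pair_card_gt1 aP cP hk sepV.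
have UP := ksep_meets_P acP hk sepU; have VP := ksep_meets_P acP hk sepV.
set V := (E :\: [set a; c]) :\: U in sUV V2 VP.
have sVU := del_split_sym sUV; have sYX := del_split_sym sXY.
have sUV' : del_split M [set c; a] U V by rewrite setUC.
have sVU' := del_split_sym sUV'.
move: (uniq_split sXY XP YP ab cd); rewrite /= !inE !negb_or.
move=> /and5P [/and4P [_ _ ad ap] /and3P [bc bd bp] /andP [_ cp] dp _].
have inV z : z \in P -> z \notin [set a; c] -> (z \in V) = (z \notin U).
  move=> /(subsetP PE) zE zac; case: sUV => _ _ /(_ z zE) + _.
  by rewrite (negbTE zac); case: (z \in U); case: (z \in V).
have bV : (b \in V) = (b \notin U) by rewrite inV // !inE negb_or eq_sym ab bc.
have dV : (d \in V) = (d \notin U) by rewrite inV // !inE negb_or eq_sym ad eq_sym cd.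
have pV : (p \in V) = (p \notin U) by rewrite inV // !inE negb_or eq_sym ap eq_sym cp.
have P3 (A : {set T}) : b \in A -> d \in A -> p \in A -> 2 < #|A :&: P|.
  move=> bA dA pA; apply: leq_trans (subset_leq_card (_ : [set b; d; p] \subset _)).
    by rewrite cards3 //= !inE negb_or bd bp dp.
  by rewrite !subUset !sub1set !inE bA dA pA bP dP pP.
move: bV dV pV; case bU: (b \in U); case dU: (d \in U); case pU: (p \in U) => bV dV pV.
- by have := P3 U bU dU pU; rank_lia.
- exact: (crossing_bdU_pV pP sXY XP YP ab cd sUV V2 bU dU pV).
- exact: (crossing_bpU_dV pP sXY XP YP ab cd sUV V2 bU pU dV).
- exact: (crossing_bpU_dV pP sYX YP XP cd ab sVU' U2 dV pV bU).
- exact: (crossing_bpU_dV pP sYX YP XP cd ab sUV' V2 dU pU bV).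
- exact: (crossing_bpU_dV pP sXY XP YP ab cd sVU U2 bV pV dU).
- exact: (crossing_bdU_pV pP sXY XP YP ab cd sVU U2 bV dV pU).
- by have := P3 V bV dV pV; rank_lia.
Qed.

Lemma split_of_not_three_connected_del p : p \in P -> ~ three_connected_del M [set p] ->
  exists a b c d (X Y : {set T}), [/\ del_split M [set p] X Y,
    X :&: P = [set a; b], Y :&: P = [set c; d], a != b & c != d].
Proof.
move=> pP /ksep_of_not_three_connected [k [X [hk sepX]]].
have pPs : [set p] \subset P by rewrite sub1set.
have XP := ksep_meets_P pPs hk sepX; have YP := ksep_meets_P pPs hk (ksep_compl sepX).
have sXY := ksep_del_split hk sepX; set Y := _ :\: X in sXY YP.
have [_ _ part _] := sXY.
have XYP : (X :&: P) :|: (Y :&: P) = P :\ p.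
  apply/setP => z; rewrite !inE; case zP: (z \in P); rewrite ?andbF // !andbT.
  move: (part z (subsetP PE z zP)); rewrite in_set1 (subsetP PE z zP) andbT.
  by case: (z \in X); case: (z \in Y); case: (z == p).
have XYP0 : (X :&: P) :&: (Y :&: P) = set0.
  apply/setP => z; rewrite !inE; case zP: (z \in P); rewrite ?andbF // !andbT.
  by move: (part z (subsetP PE z zP)); do 3 case: (_ \in _).
have := cardsUI (X :&: P) (Y :&: P); rewrite XYP XYP0 cards0.
have := cardsD1 p P; rewrite pP card_P => card4 cardXY.
have /cards2P [a [b [ab XabP]]] : #|X :&: P| == 2 by rank_lia.
have /cards2P [c [d [cd YcdP]]] : #|Y :&: P| == 2 by rank_lia.
by exists a, b, c, d, X, Y.
Qed.

End U35.

Theorem lemma4p3 (T : finType) (M : matroid T) (P : {set T}) :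
  three_connected M ->
  restr_iso_uniform M P 3 5 ->
  (forall C : {set T}, C \subset mclosure M P -> ~~ mtriangle M C) ->
  (forall C : {set T}, C \subset P -> ~~ mtriad M C) ->
  forall p : T, p \in P -> ~ three_connected_del M [set p] ->
  exists p1 p2 p3 p4 : T,
    [/\ uniq [:: p1; p2; p3; p4], [set p1; p2; p3; p4] = P :\ p &
        forall i j : T, i \in [:: p1; p2] -> j \in [:: p3; p4] ->
          three_connected_del M [set i; j]].
Proof.
move=> conn isoP triangle_free triad_free p pP notconn.
have PE : P \subset ground M by case: isoP.
have rank_subP := restr_iso_uniform_rank isoP; have card_P := restr_iso_uniform_card isoP.
have [a [b [c [d [X [Y [sXY XP YP ab cd]]]]]]] :=
  split_of_not_three_connected_del conn PE rank_subP card_P pP notconn.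
have del_pair := del_pair_three_connected conn PE rank_subP card_P triangle_free triad_free pP sXY.
have XP' : X :&: P = [set b; a] by rewrite setUC.
have YP' : Y :&: P = [set d; c] by rewrite setUC.
have ba : b != a by rewrite eq_sym.
have dc : d != c by rewrite eq_sym.
have [uniq_abcd abcdP] := split_labelling PE pP sXY XP YP ab cd.
exists a, b, c, d; split=> //.
move=> i j; rewrite !inE => /orP [] /eqP -> /orP [] /eqP ->.
- exact: del_pair XP YP ab cd.
- exact: del_pair XP YP' ab dc.
- exact: del_pair XP' YP ba cd.
- exact: del_pair XP' YP' ba dc.
Qed.
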